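(* Let $S$ be a finite $p$-group for an odd prime $p$. Then $J(S)\leq \mathfrak{X}(S)$ if and only if $\mathfrak{X}(L)=\mathfrak{X}(S)$ for every subgroup $L$ of $S$ with $\mathfrak{X}(S)\leq L\leq J(S)\mathfrak{X}(S)$.
   Context: For a finite $p$-group $G$ and subgroups $A,B$, write $[A,B;1]=[A,B]$ and $[A,B;k]=[[A,B;k-1],B]$. $\Omega_1(G)$ denotes the subgroup generated by the elements of order $p$ in $G$. The Oliver subgroup $\mathfrak{X}(G)$ of a finite $p$-group $G$ is the unique largest normal subgroup $K$ of $G$ admitting a chain $1=Q_0\leq Q_1\leq\cdots\leq Q_n=K$ of normal subgroups $Q_i\unlhd G$ such that $[\Omega_1(C_G(Q_{i-1})),Q_i;p-1]=1$ for each $1\leq i\leq n$. For a subgroup $L\leq S$, $\mathfrak{X}(L)$ is the Oliver subgroup of $L$ regarded as a $p$-group in its own right. $J(S)$ is the Thompson subgroup of $S$: the subgroup generated by all elementary abelian $p$-subgroups of $S$ whose rank equals the $p$-rank of $S$ (the largest rank of an elementary abelian $p$-subgroup of $S$). *)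

From Stdlib Require Import ClassicalEpsilon.
From mathcomp Require Import all_boot all_fingroup all_solvable.
Set Implicit Arguments. Unset Strict Implicit. Unset Printing Implicit Defensive.
Import GroupScope.
Local Open Scope group_scope.

Section Oliver.
Variable gT : finGroupType.
Implicit Types (A B : {set gT}) (G K Q : {group gT}).

Fixpoint comm_iter A B (k : nat) : {set gT} :=
  match k with
  | 0 => A
  | k'.+1 => [~: comm_iter A B k', B]
  end.

Definition oliver_step (p : nat) G (Q1 Q2 : {group gT}) : bool :=
  [&& Q1 \subset Q2, Q2 <| G &
      comm_iter 'Ohm_1('C_G(Q1)) Q2 p.-1 == 1].

Definition admits_oliver_chain (p : nat) G K : Prop :=
  exists s : seq {group gT}, path (oliver_step p G) 1%G s /\ last 1%G s = K.

Definition admits_oliver_chainb (p : nat) G K : bool :=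
  if excluded_middle_informative (admits_oliver_chain p G K) then true
  else false.

(* The Oliver subgroup X(G) of the p-group G: the largest normal subgroup
   admitting an Oliver chain, realised as the join of all such subgroups. *)
Definition oliver (p : nat) G : {set gT} :=
  << \bigcup_(K : {group gT} | (K <| G) && admits_oliver_chainb p G K) K >>.

Definition thompson (p : nat) G : {set gT} :=
  << \bigcup_(E in 'E_p^('r_p(G))(G)) E >>.

End Oliver.

(* X = X(S) admits an Oliver chain itself, because Oliver chains are stable
   under joins, and for odd p it contains C_S(X): otherwise a normal subgroup T
   of C_S(X) outside X with [T, C_S(X)] <= X could be appended to a chain for X.
   If J(S) <= X, every L in the interval is X.  Conversely, if J(S) is not
   contained in X, let W = Omega_1(Z(X)); Thompson replacement turns an
   elementary abelian subgroup of maximal rank outside X into one acting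
   quadratically on W, which yields a in J(S) \ X with [W, a, a] = 1.  Since
   Omega_1(C_{X<a>}(X)) <= W and p - 1 >= 2, the step X <= X<a> extends a chain
   for X, so a lies in X(X<a>) and X(X<a>) <> X although X <= X<a> <= J(S) X. *)

From Stdlib Require Import ClassicalEpsilon.
From mathcomp Require Import all_boot all_fingroup all_solvable.
Set Implicit Arguments. Unset Strict Implicit. Unset Printing Implicit Defensive.
Import GroupScope.

Section CommIter.
Variable gT : finGroupType.
Implicit Types (A B : {set gT}) (G H K : {group gT}).

Lemma comm_iterSg A A' B k : A \subset A' -> comm_iter A B k \subset comm_iter A' B k.
Proof. by move=> sAA'; elim: k => //= k IHk; apply: commSg. Qed.

Lemma comm_iter_eq1S G A B k :
  G \subset A -> comm_iter A B k = 1 -> comm_iter G B k = 1.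
Proof.
move=> sGA trivA; apply/eqP; rewrite eqEsubset sub1set -{1}trivA comm_iterSg //=.
by case: k {trivA} => [|k] /=; rewrite group1.
Qed.

Lemma comm_iter_eq1_leq A B k j :
  k <= j -> comm_iter A B k = 1 -> comm_iter A B j = 1.
Proof.
move=> /subnKC <- trivAB; elim: (j - k) => [|i IHi]; first by rewrite addn0.
by rewrite addnS /= IHi comm1G.
Qed.

Lemma commg_centM A K H : A \subset 'C(K) -> [~: A, K * H] = [~: A, H].
Proof.
move=> cAK; apply/eqP; rewrite eqEsubset (commgS _ (mulG_subr K H)) andbT.
rewrite gen_subG; apply/subsetP=> _ /imset2P[a _ Aa /imset2P[k h Kk Hh ->] ->].
have /commgP/eqP cak : commute a k := centP (subsetP cAK a Aa) k Kk.
by rewrite commgMJ cak conj1g mulg1 mem_commg.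
Qed.

Lemma comm_iter_centM A K H k : A \subset 'C(K) -> H \subset 'N('C(K)) ->
  comm_iter A (K * H) k = comm_iter A H k.
Proof.
move=> cAK nCH; suff: comm_iter A (K * H) k = comm_iter A H k /\
  comm_iter A H k \subset 'C(K) by case.
elim: k => [|k [IHk cRK]] //=; rewrite IHk commg_centM //.
by split=> //; apply: subset_trans (commSg H cRK) _; rewrite commg_subl.
Qed.

End CommIter.

Section OliverChains.
Variables (gT : finGroupType) (p : nat).
Implicit Types (G H K L Q : {group gT}).

Canonical oliver_group G := Eval hnf in [group of oliver p G].

Lemma admits_oliver_chainP G K :
  reflect (admits_oliver_chain p G K) (admits_oliver_chainb p G K).
Proof.
by rewrite /admits_oliver_chainb; case: excluded_middle_informative; constructor.
Qed.

Lemma oliver_step_join G K Q0 Q1 : K <| G ->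
  oliver_step p G Q0 Q1 -> oliver_step p G (K <*> Q0)%G (K <*> Q1)%G.
Proof.
move=> nsKG /and3P[sQ01 nsQ1G trivQ1].
have nKQ1 : Q1 \subset 'N(K) := subset_trans (normal_sub nsQ1G) (normal_norm nsKG).
rewrite /oliver_step normalY // genS ?setUS //= (norm_joinEr nKQ1).
have cOK : 'Ohm_1('C_G(K <*> Q0)) \subset 'C(K).
  by rewrite (subset_trans (Ohm_sub 1 _)) // subIset // centS ?orbT ?joing_subl.
rewrite comm_iter_centM ?norms_cent //; apply/eqP; apply: comm_iter_eq1S (eqP trivQ1).
by rewrite OhmS ?setIS ?centS ?joing_subr.
Qed.

Lemma oliver_path_sub G Q s : path (oliver_step p G) Q s -> Q \subset last Q s.
Proof.
elim: s Q => //= Q' s IHs Q /andP[/and3P[sQQ' _ _] /IHs]; exact: subset_trans.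
Qed.

Lemma admits_oliver_chain_join G K1 K2 : K1 <| G ->
  admits_oliver_chain p G K1 -> admits_oliver_chain p G K2 ->
  admits_oliver_chain p G (K1 <*> K2)%G.
Proof.
move=> nsK1G [s1 [path1 last1]] [s2 [path2 last2]].
have K1Y1 : (K1 <*> 1)%G = K1 by apply: val_inj; rewrite /= joingG1.
pose joinK1 Q := (K1 <*> Q)%G.
have path_join x s : path (oliver_step p G) x s ->
    path (oliver_step p G) (joinK1 x) (map joinK1 s).
  by elim: s x => //= y s IHs x /andP[stepxy /IHs->]; rewrite oliver_step_join.
exists (s1 ++ map joinK1 s2); split.
  by rewrite cat_path path1 last1 /= -{1}K1Y1 path_join.
by rewrite last_cat last1 -{1}K1Y1 (last_map joinK1) last2.
Qed.

Lemma admits_oliver_chain_rcons G K Q :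
  admits_oliver_chain p G K -> oliver_step p G K Q -> admits_oliver_chain p G Q.
Proof.
move=> [s [pathKs lastK]] stepKQ; exists (rcons s Q).
by rewrite rcons_path pathKs lastK stepKQ last_rcons.
Qed.

Lemma admits_oliver_chain_sub G K L : K \subset L -> L \subset G ->
  admits_oliver_chain p G K -> admits_oliver_chain p L K.
Proof.
move=> sKL sLG [s [pathGs lastK]]; exists s; split=> //.
rewrite -lastK in sKL; clear lastK.
elim: s 1%G pathGs sKL => //= Q s IHs Q0 /andP[/and3P[sQ0Q nsQG trivQ] pathQs] sKL.
have sQL : Q \subset L := subset_trans (oliver_path_sub pathQs) sKL.
rewrite IHs // andbT /oliver_step sQ0Q (normalS sQL sLG nsQG) /=.
by apply/eqP; apply: comm_iter_eq1S (eqP trivQ); rewrite OhmS ?setSI.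
Qed.

Lemma oliver_sub G : oliver p G \subset G.
Proof. by rewrite gen_subG; apply/bigcupsP=> K /andP[/normal_sub]. Qed.

Lemma sub_oliver G K : K <| G -> admits_oliver_chain p G K -> K \subset oliver p G.
Proof.
move=> nsKG chainK; rewrite sub_gen // (bigcup_sup K) // nsKG.
exact/admits_oliver_chainP.
Qed.

Lemma oliver_normal_chain G :
  oliver p G <| G /\ admits_oliver_chain p G (oliver_group G).
Proof.
pose P K := (K <| G) && admits_oliver_chainb p G K.
have P1 : P 1%G by rewrite /P normal1; apply/admits_oliver_chainP; exists [::].
have [K0 /andP[nsK0G /admits_oliver_chainP chainK0] maxK0] :=
  arg_maxnP (fun K => #|K|) P1.
suff oliverE : oliver_group G = K0.
  by rewrite -[oliver p G]/(gval (oliver_group G)) oliverE.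
apply/val_inj/eqP; rewrite eqEsubset sub_oliver // andbT gen_subG.
apply/bigcupsP=> K /andP[nsKG /admits_oliver_chainP chainK].
have PK0K : P (K0 <*> K)%G.
  by rewrite /P normalY //; apply/admits_oliver_chainP/admits_oliver_chain_join.
have /eqP-> : K0 :==: (K0 <*> K)%G by rewrite eqEcard joing_subl; apply: maxK0.
exact: joing_subr.
Qed.

Lemma oliver_normal G : oliver p G <| G.
Proof. by case: (oliver_normal_chain G). Qed.

Lemma oliver_chain G : admits_oliver_chain p G (oliver_group G).
Proof. by case: (oliver_normal_chain G). Qed.

Lemma oliver_sub_oliver G L :
  oliver p G \subset L -> L \subset G -> oliver p G \subset oliver p L.
Proof.
move=> sXL sLG; apply: sub_oliver; first exact: normalS sXL sLG (oliver_normal G).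
exact: admits_oliver_chain_sub sXL sLG (oliver_chain G).
Qed.

Lemma quadratic_oliver_step G K Q : 2 < p -> K \subset Q -> Q <| G ->
  comm_iter 'Ohm_1('C_G(K)) Q 2 = 1 -> oliver_step p G K Q.
Proof.
move=> p_gt2 sKQ nsQG triv2; rewrite /oliver_step sKQ nsQG.
by rewrite (comm_iter_eq1_leq _ triv2) ?eqxx ?ltn_predRL.
Qed.

Lemma nil_lcn_last_not_sub (C H : {group gT}) : nilpotent C -> ~~ (C \subset H) ->
  exists n, ~~ ('L_n.+1(C) \subset H) && ([~: 'L_n.+1(C), C] \subset H).
Proof.
case/lcnP=> n trivLn nsCH.
have exL : exists m, 'L_m.+1(C) \subset H by exists n; rewrite trivLn sub1G.
case: (ex_minnP exL) => [[|m] sLH minL]; first by move: nsCH; rewrite -{1}(lcn1 C) sLH.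
exists m; rewrite -lcnSn sLH andbT; apply/negP=> /minL.
by rewrite ltnn.
Qed.

Lemma oliver_cent_sub G : 2 < p -> p.-group G -> 'C_G(oliver p G) \subset oliver p G.
Proof.
move=> p_gt2 pG; set X := oliver_group G; set C := 'C_G(X).
have nsXG : X <| G := oliver_normal G.
apply: contraT => nsCX.
have nsCG : C <| G by have := subcent_normal G X; rewrite (setIidPl (normal_norm nsXG)).
have nilC : nilpotent C := pgroup_nil (pgroupS (subsetIl _ _) pG).
have [n /andP[nsTX sTCX]] := nil_lcn_last_not_sub nilC nsCX.
set T := 'L_n.+1(C) in nsTX sTCX.
have sTC : T \subset C := char_sub (lcn_char _ _).
have nsTG : T <| G := char_normal_trans (lcn_char _ _) nsCG.
have cCX : C \subset 'C(X) := subsetIr _ _.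
have nCXT : T \subset 'N('C(X)).
  by rewrite norms_cent // (subset_trans (normal_sub nsTG)) ?normal_norm.
suff chainXT : admits_oliver_chain p G (X <*> T)%G.
  case/negP: nsTX; rewrite (subset_trans (joing_subr X T)) //.
  exact: sub_oliver (normalY nsXG nsTG) chainXT.
apply: admits_oliver_chain_rcons (oliver_chain G) _.
apply: quadratic_oliver_step; rewrite ?joing_subl ?normalY //.
have defXT : (X <*> T)%G :=: X * T.
  exact/norm_joinEr/(subset_trans (normal_sub nsTG) (normal_norm nsXG)).
rewrite defXT.
have cOX : 'Ohm_1(C) \subset 'C(X) := subset_trans (Ohm_sub 1 _) cCX.
rewrite comm_iter_centM //=; apply/trivgP.
have sOTCX : [~: 'Ohm_1(C), T] \subset C :&: X.
  have sOTCT : [~: T, 'Ohm_1(C)] \subset [~: T, C] := commgS T (Ohm_sub 1 C).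
  rewrite subsetI commGC (subset_trans sOTCT) ?(subset_trans sOTCT sTCX) //.
  by rewrite commg_subr (subset_trans sTC) ?normG.
rewrite (subset_trans (commSg _ sOTCX)) //; apply/trivgP/commG1P.
by rewrite (subset_trans (subsetIr _ _)) // centsC (subset_trans sTC cCX).
Qed.

Lemma mem_oliver_join_quadratic G a : 2 < p -> p.-group G -> a \in G ->
  [~: [~: 'Ohm_1('Z(oliver p G)), <[a]>], <[a]>] = 1 ->
  a \in oliver p (oliver_group G <*> <[a]>)%G.
Proof.
move=> p_gt2 pG Ga quad_a; set X := oliver_group G; set L := (X <*> <[a]>)%G.
have nsXG : X <| G := oliver_normal G.
have nXa : <[a]> \subset 'N(X) by rewrite cycle_subG (subsetP (normal_norm nsXG)).
have sXL : X \subset L := joing_subl _ _.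
have sLG : L \subset G by rewrite join_subG normal_sub // cycle_subG.
have defL : L :=: X * <[a]> := norm_joinEr nXa.
suff sLXL : L \subset oliver p L.
  by rewrite (subsetP sLXL) // mem_gen // inE cycle_id orbT.
apply: sub_oliver (normal_refl L) _.
apply: admits_oliver_chain_rcons (admits_oliver_chain_sub sXL sLG (oliver_chain G)) _.
apply: quadratic_oliver_step (normal_refl L) _ => //.
have sCLZ : 'C_L(X) \subset 'Z(X).
  by rewrite subsetI subsetIr (subset_trans (setSI _ sLG)) ?oliver_cent_sub.
apply: comm_iter_eq1S (OhmS 1 sCLZ) _.
rewrite defL comm_iter_centM ?norms_cent //.
exact: subset_trans (Ohm_sub 1 _) (subsetIr _ _).
Qed.

End OliverChains.

Section ElementaryAbelianRank.
Variables (gT : finGroupType) (p : nat) (S A : {group gT}).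
Hypotheses (pr_p : prime p) (EA : A \in 'E_p^('r_p(S))(S)).

Lemma card_pElem_max E : E \in 'E_p(S) -> #|E| <= #|A|.
Proof.
move=> EE; have [_ abelE] := pElemP EE.
rewrite (card_pnElem EA) (card_pgroup (abelem_pgroup abelE)).
by rewrite leq_pexp2l ?prime_gt0 ?logn_le_p_rank.
Qed.

Lemma pElem_max_card E : E \in 'E_p(S) -> #|A| <= #|E| -> E \in 'E_p^('r_p(S))(S).
Proof.
move=> EE leAE; rewrite pnElemE // inE EE -(card_pnElem EA) eqn_leq leAE.
by rewrite card_pElem_max.
Qed.

End ElementaryAbelianRank.

Section QuadraticReplacement.
Variables (gT : finGroupType) (p : nat) (S W A : {group gT}).
Hypotheses (pr_p : prime p) (pS : p.-group S) (sWS : W \subset S).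
Hypotheses (nWS : S \subset 'N(W)) (abelW : p.-abelem W).
Hypothesis EA : A \in 'E_p^('r_p(S))(S).
Variable v : gT.
Hypothesis Wv : v \in W.

(* The fibres of a |-> C_W(A) [v, a] lie in cosets of C_A(U), which is why
   C_A(U) <*> (U <*> C_W(A)) still has maximal rank. *)

Let U := <<[set [~ v, a] | a in A]>>%G.
Let Z := 'C_W(A)%G.
Let B := 'C_A(U)%G.
Let UZ := (U <*> Z)%G.

Let sAS : A \subset S. Proof. by case/pnElemP: EA. Qed.
Let abelA : p.-abelem A. Proof. by case/pnElemP: EA. Qed.
Let cAA : abelian A := abelem_abelian abelA.
Let cWW : abelian W := abelem_abelian abelW.
Let nWA : A \subset 'N(W) := subset_trans sAS nWS.
Let sZW : Z \subset W := subsetIl _ _.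
Let cZA : Z \subset 'C(A) := subsetIr _ _.
Let nZA : A \subset 'N(Z). Proof. by rewrite normsI ?norms_cent ?normG. Qed.
Let sBA : B \subset A := subsetIl _ _.
Let sAWZ : A :&: W \subset Z.
Proof. by rewrite subsetI subsetIr (subset_trans (subsetIl _ _)) // -abelianE. Qed.

Let sUWA : U \subset [~: W, A].
Proof. by rewrite gen_subG; apply/subsetP=> _ /imsetP[a Aa ->]; apply: mem_commg. Qed.

Let vU a : a \in A -> [~ v, a] \in U.
Proof. by move=> Aa; apply: mem_gen; apply: imset_f. Qed.

Let centU : 'C(U) = 'C([set [~ v, a] | a in A]). Proof. exact: cent_gen. Qed.

Let sUW : U \subset W.
Proof. by rewrite (subset_trans sUWA) ?commg_subl. Qed.

Let sUZW : UZ \subset W. Proof. by rewrite join_subG sUW sZW. Qed.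

Let cBUZ : B \subset 'C(UZ).
Proof. by rewrite centY subsetI subsetIr (subset_trans sBA) // centsC. Qed.

Lemma commg_rcoset_fiber a a0 : a \in A -> a0 \in A ->
  [~ v, a] \in Z :* [~ v, a0] -> a \in B :* a0.
Proof.
move=> Aa Aa0; rewrite !mem_rcoset; set c := a * a0^-1 => vaZ.
have Ac : c \in A by rewrite groupM ?groupV.
have vW b : b \in A -> [~ v, b] \in W.
  by move=> Ab; rewrite (subsetP sUW) ?vU.
have vWJ b b' : b \in A -> b' \in A -> [~ v, b] ^ b' \in W.
  by move=> Ab Ab'; rewrite memJ_norm ?vW ?(subsetP nWA).
have defa : a = c * a0 by rewrite mulgKV.
have vcZ : [~ v, c] \in Z.
  rewrite -(memJ_norm _ (subsetP nZA a0 Aa0)).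
  suff -> : [~ v, c] ^ a0 = [~ v, a] * [~ v, a0]^-1 by [].
  rewrite [in [~ v, a]]defa (commgMJ v c a0).
  by rewrite (centsP cWW _ (vW _ Aa0) _ (vWJ _ _ Ac Aa0)) mulgK.
rewrite /B inE Ac /= centU; apply/centP=> _ /imsetP[b Ab ->].
apply: commute_sym; apply/commgP/conjg_fixP.
have fix_vc : [~ v, c] ^ b = [~ v, c].
  by apply/conjg_fixP/commgP; apply: (centP (subsetP cZA _ vcZ)).
have := commgMJ v b c; rewrite (centsP cAA b Ab c Ac) commgMJ fix_vc.
by rewrite (centsP cWW _ (vW _ Ab) _ (vW _ Ac)) => /mulgI/esym.
Qed.

Lemma card_replacement_bound : (#|A| * #|Z| <= #|B| * #|UZ|)%N.
Proof.
have sZUZ : Z \subset UZ := joing_subr _ _.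
rewrite -(Lagrange sZUZ) mulnCA mulnC leq_mul2l; apply/orP; right.
pose phi a := Z :* [~ v, a].
rewrite -sum1_card (partition_big_imset phi) /=.
apply: leq_trans (_ : \sum_(Zx in phi @: A) #|B| <= _).
  apply: leq_sum => _ /imsetP[a0 Aa0 ->].
  rewrite sum1dep_card -(card_rcoset B a0) subset_leq_card //.
  apply/subsetP=> a; rewrite inE => /andP[Aa /eqP eq_phi].
  by rewrite commg_rcoset_fiber // -[Z :* _]/(phi a0) -eq_phi rcoset_refl.
rewrite sum_nat_const mulnC leq_mul2l /indexg subset_leq_card ?orbT //.
apply/subsetP=> _ /imsetP[a Aa ->]; rewrite mem_rcosets.
by rewrite (subsetP (mulG_subr _ _)) // (subsetP (joing_subl _ _)) ?vU.
Qed.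

Lemma replacement_pnElem : (B <*> UZ)%G \in 'E_p^('r_p(S))(S).
Proof.
apply: (pElem_max_card pr_p EA).
  apply/pElemP; split; first by rewrite join_subG (subset_trans sBA) ?(subset_trans sUZW).
  by rewrite (cprod_abelem p (cprodEY _)) ?(abelemS sBA) ?(abelemS sUZW) // centsC.
rewrite -(leq_pmul2r (cardG_gt0 Z)) (leq_trans card_replacement_bound) //.
rewrite mul_cardG /= -cent_joinEr ?leq_mul2l ?subset_leq_card ?orbT //.
  by rewrite (subset_trans _ sAWZ) // setISS.
by rewrite centsC.
Qed.

Lemma replacement_fills : B \subset 'C(W) -> UZ :=: W.
Proof.
move=> cBW; set CA := 'C_A(W).
have cCAW : CA \subset 'C(W) := subsetIr _ _.
have sBCA : B \subset CA by rewrite subsetI sBA.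
have card_CAW : #|CA <*> W| <= #|A|.
  apply: (card_pElem_max pr_p EA); apply/pElemP; split.
    by rewrite join_subG (subset_trans (subsetIl _ _)) ?sWS.
  by rewrite (cprod_abelem p (cprodEY _)) ?(abelemS (subsetIl _ _) abelA) // centsC.
apply/eqP; rewrite eqEcard sUZW -(leq_pmul2l (cardG_gt0 CA)).
apply: leq_trans (leq_mul (subset_leq_card sBCA) (leqnn _)).
apply: leq_trans card_replacement_bound.
rewrite mul_cardG -cent_joinEr ?leq_mul // 1?centsC //.
by rewrite subset_leq_card // (subset_trans _ sAWZ) // setSI ?subsetIl.
Qed.

Lemma replacement_noncentral : [~: W, A] != 1 -> [~: W, (B <*> UZ)%G] != 1.
Proof.
move=> ntWA; apply/eqP=> /commG1P cWBUZ; set H := [~: W, A].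
have cBW : B \subset 'C(W) by rewrite centsC (subset_trans cWBUZ) ?centS ?joing_subl.
have cUZ : Z \subset 'C(U) by rewrite (subset_trans sZW) ?(subset_trans cWW) ?centS.
have nUAZ : Z \subset 'N([~: U, A]).
  rewrite cents_norm // centsC (subset_trans _ (subset_trans cWW (centS sZW))) //.
  by rewrite (subset_trans (commSg A sUW)) ?commg_subl.
have sHHA : H \subset [~: H, A].
  rewrite {1}/H -(replacement_fills cBW) /= cent_joinEr // commMG //.
  by rewrite (commG1P cZA) mulg1 commSg.
have nilWA : nilpotent (W <*> A) by rewrite (pgroup_nil (pgroupS _ pS)) // join_subG sWS.
have sHWA : H \subset W <*> A by rewrite (subset_trans _ (joing_subl _ _)) ?commg_subl.
have nHA : A \subset 'N_(W <*> A)(H) by rewrite subsetI joing_subr commg_normr.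
by have := nil_comm_properl nilWA sHWA ntWA nHA; rewrite properE sHHA andbF.
Qed.

Lemma replacement_cent_proper a1 : a1 \in A -> [~ v, a1] \notin 'C(A) ->
  'C_A(W) \proper 'C_(B <*> UZ)(W).
Proof.
move=> Aa1 ncA; rewrite properE; apply/andP; split.
  rewrite subsetI subsetIr andbT (subset_trans _ (joing_subl _ _)) // subsetI.
  by rewrite subsetIl (subset_trans (subsetIr _ _)) ?centS.
apply: contra ncA => sCW; apply: (subsetP cZA); apply: (subsetP sAWZ).
have sUC : U \subset 'C_(B <*> UZ)(W).
  rewrite subsetI (subset_trans sUW cWW) andbT.
  by rewrite (subset_trans (joing_subl U Z)) ?joing_subr.
have sUA : U \subset A by rewrite (subset_trans sUC) ?(subset_trans sCW) ?subsetIl.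
by rewrite inE (subsetP sUW) ?(subsetP sUA) ?vU.
Qed.

End QuadraticReplacement.

Section ThompsonSubgroup.
Variables (gT : finGroupType) (p : nat) (S W : {group gT}).
Hypotheses (pr_p : prime p) (pS : p.-group S) (sWS : W \subset S).
Hypotheses (nWS : S \subset 'N(W)) (abelW : p.-abelem W).

Lemma quadratic_replacement A : A \in 'E_p^('r_p(S))(S) -> [~: W, A] != 1 ->
  exists2 A' : {group gT}, A' \in 'E_p^('r_p(S))(S) &
    [~: W, A'] != 1 /\ [~: [~: W, A'], A'] = 1.
Proof.
move=> EA ntWA.
pose P (A' : {group gT}) := (A' \in 'E_p^('r_p(S))(S)) && ([~: W, A'] != 1).
have PA : P A by rewrite /P EA.
have [A' /andP[EA' ntWA'] maxA'] := arg_maxnP (fun A' : {group gT} => #|'C_A'(W)|) PA.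
exists A' => //; split=> //; apply/commG1P; apply: contraT.
rewrite gen_subG => /subsetPn[_ /imset2P[v a1 Wv A'a1 ->] ncA'].
have Pstar : P _ := introT andP (conj (replacement_pnElem pr_p sWS nWS abelW EA' Wv)
                          (replacement_noncentral pr_p pS sWS nWS abelW EA' Wv ntWA')).
have := proper_card (replacement_cent_proper nWS abelW EA' Wv A'a1 ncA').
by move/leq_trans/(_ (maxA' _ Pstar)); rewrite ltnn.
Qed.

Lemma thompson_sub : thompson p S \subset S.
Proof. by rewrite gen_subG; apply/bigcupsP=> E /pnElemP[]. Qed.

Lemma thompson_quadratic_elt (X : {group gT}) :
  X \subset 'C(W) -> ~~ (thompson p S \subset X) ->
  exists2 a, a \in thompson p S :\: X & [~: [~: W, <[a]>], <[a]>] = 1.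
Proof.
move=> cXW; rewrite {1}/thompson gen_subG => /subsetPn[x /bigcupP[E EE Ex] nXx].
have mem_thompson A a : A \in 'E_p^('r_p(S))(S) -> a \in A -> a \in thompson p S.
  by move=> EA Aa; apply/mem_gen/bigcupP; exists A.
have [trivWE | ntWE] := eqVneq [~: W, E] 1.
  exists x; first by rewrite inE nXx (mem_thompson E).
  have /trivgP-> : [~: W, <[x]>] \subset [1] by rewrite -trivWE commgS ?cycle_subG.
  exact: comm1G.
have [A' EA' [ntWA' quadA']] := quadratic_replacement EE ntWE.
have /subsetPn[a A'a ncWa] : ~~ (A' \subset 'C(W)).
  by apply: contra ntWA' => cA'W; apply/eqP/commG1P; rewrite centsC.
exists a; first by rewrite inE (mem_thompson A') // andbT (contra (subsetP cXW a)).
by apply/trivgP; rewrite -quadA' commgSS ?commgS ?cycle_subG.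
Qed.

End ThompsonSubgroup.

Theorem theorem1p4 (gT : finGroupType) (p : nat) (S : {group gT}) :
  prime p -> odd p -> p.-group S ->
  (thompson p S \subset oliver p S) <->
  (forall L : {group gT},
      oliver p S \subset L -> L \subset thompson p S * oliver p S ->
      oliver p L = oliver p S).
Proof.
move=> pr_p odd_p pS; have p_gt2 := odd_prime_gt2 odd_p pr_p.
have nsXS : oliver p S <| S := oliver_normal p S.
split=> [sJX L sXL sLJX | oliverL].
  have sLX : L \subset oliver p S by rewrite (subset_trans sLJX) ?mul_subG.
  apply/eqP; rewrite eqEsubset (subset_trans (oliver_sub p L)) //.
  by rewrite oliver_sub_oliver // (subset_trans sLX) ?oliver_sub.
apply: contraT => nsJX; set X := oliver_group p S.
set W := 'Ohm_1('Z(X)).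
have nsWS : W <| S := char_normal_trans (char_trans (Ohm_char 1 _) (center_char X)) nsXS.
have abelW : p.-abelem W.
  have pX : p.-group X := pgroupS (normal_sub nsXS) pS.
  by rewrite Ohm1_abelem ?center_abelian ?(pgroupS (center_sub X)).
have cXW : X \subset 'C(W) by rewrite centsC (subset_trans (Ohm_sub 1 _)) ?subsetIr.
have [sWS nWS] := andP nsWS.
have [a /setDP[Ja X'a] quad_a] := thompson_quadratic_elt pr_p pS sWS nWS abelW cXW nsJX.
have Sa : a \in S := subsetP (thompson_sub p S) a Ja.
have nXa : <[a]> \subset 'N(X) by rewrite cycle_subG (subsetP (normal_norm nsXS)).
have := mem_oliver_join_quadratic p_gt2 pS Sa quad_a.
rewrite oliverL ?joing_subl ?(negPf X'a) //.
by rewrite /= norm_joinEr // -(normC nXa) mulSg ?cycle_subG.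
Qed.
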